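(* Let $c$ be a prime of the form $2^r\cdot 3+1$ ($r\ge1$), and let $a,b>1$ be integers with $a,b,c$ pairwise coprime and $e_c(b)=3$. Suppose positive integers $z,Y,Z$ with $z\le Z$ and $Y\equiv 4\pmod 6$ satisfy $a+b=c^z$ and $a+b^Y=c^Z$, and let $e=\nu_c((Y-1)/3)$. Then \[ c^z(2b+1)+(Y-1)(b^2+b+1)\equiv 0\pmod{c^{2(z-e)}}. \]
   Context: For a positive integer $M$ and an integer $A$ coprime to $M$, $e_M(A)$ denotes the least positive integer $e$ such that $A^e\equiv \pm1\pmod M$. $\nu_c$ is the $c$-adic valuation. *)

From mathcomp Require Import all_boot.
Set Implicit Arguments. Unset Strict Implicit. Unset Printing Implicit Defensive.

Definition pm1_mod (M A e : nat) : bool :=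
  (A ^ e == 1 %[mod M]) || (M %| A ^ e + 1).

Definition e_ord_is (M A e : nat) : Prop :=
  0 < e /\ pm1_mod M A e /\ (forall k, 0 < k < e -> ~~ pm1_mod M A k).

From mathcomp Require Import all_boot all_algebra zify ring.
Set Implicit Arguments. Unset Strict Implicit. Unset Printing Implicit Defensive.

(* Write Y = 3m + 1 with m odd, u = b^2 + b + 1, w = b^3 - 1 = (b - 1) u and
   D = b^(3m) - 1 = (1 + w)^m - 1.  Subtracting the two equations gives
   c^Z - c^z = b D, so c^z | D.  Since e_c(b) = 3 and m is odd, c | w while c does
   not divide b - 1, so c | u, and lifting the exponent gives
   z <= nu_c(D) = nu_c(u) + e, i.e. c^t | u with t = z - e.  A size argument gives
   2t <= Z.  Finally, with D = m w + w^2 K, the target T satisfies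
     (2b + 1) T + 3 c^Z = 4 u c^z + 3 m u^2 + 3 b w^2 K,
   whose other terms are all divisible by c^(2t), and 2b + 1 is prime to c
   because (2b + 1)^2 + 3 = 4u. *)

Lemma exp1Dn_cube_rem (w m : nat) :
  exists K, (1 + w) ^ m = 1 + m * w + 'C(m, 2) * w ^ 2 + w ^ 3 * K.
Proof.
elim: m => [|m [K IH]]; first by exists 0; rewrite bin_small //; ring.
by exists ('C(m, 2) + K + w * K); rewrite expnS IH binS bin1; ring.
Qed.

Lemma exp1Dn_sq_rem (w m : nat) : exists K, (1 + w) ^ m = 1 + m * w + w ^ 2 * K.
Proof. by have [K ->] := exp1Dn_cube_rem w m; exists ('C(m, 2) + w * K); ring. Qed.

Section LiftingTheExponent.

Variable p : nat.
Hypothesis p_pr : prime p.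

Lemma lifting_exponent_coprime (w n : nat) : p %| w -> 0 < w -> 0 < n ->
  ~~ (p %| n) -> logn p ((1 + w) ^ n - 1) = logn p w.
Proof.
move=> p_dvd_w w_gt0 n_gt0 p_ndvd_n; have [K E] := exp1Dn_sq_rem w n.
have -> : (1 + w) ^ n - 1 = w * (n + w * K) by rewrite E; lia.
have cop : coprime p (n + w * K).
  by rewrite prime_coprime // dvdn_addl // dvdn_mulr.
by rewrite lognM ?(logn_coprime cop) ?addn0 //; lia.
Qed.

Hypothesis p_odd : odd p.

Lemma lifting_exponent_prime (w : nat) : p %| w -> 0 < w ->
  logn p ((1 + w) ^ p - 1) = logn p w + 1.
Proof.
move=> p_dvd_w w_gt0.
have [K E] := exp1Dn_cube_rem w p; rewrite bin2odd // in E.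
set q := p.-1./2 in E; have p_gt1 := prime_gt1 p_pr.
set s := p * (1 + q * w) + w ^ 2 * K.
have -> : (1 + w) ^ p - 1 = w * s by rewrite E /s; lia.
have s_gt0 : 0 < s by rewrite /s; lia.
rewrite lognM //; congr (_ + _).
have p_dvd_s : p %| s by rewrite dvdn_addr ?dvdn_mulr // expnS dvdn_mulr.
have p2_ndvd_s : ~~ (p ^ 2 %| s).
  rewrite dvdn_addl; last by rewrite dvdn_mulr // dvdn_exp2r.
  rewrite expnS expn1 dvdn_pmul2l; last by lia.
  by rewrite dvdn_addl ?dvdn_mull // dvdn1 gtn_eqF.
move: p_dvd_s p2_ndvd_s; rewrite -{1}(expn1 p) !(pfactor_dvdn _ p_pr s_gt0); lia.
Qed.

Lemma lifting_exponent (w m : nat) : p %| w -> 0 < w -> 0 < m ->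
  logn p ((1 + w) ^ m - 1) = logn p w + logn p m.
Proof.
move=> p_dvd_w w_gt0.
elim: m {-2}m (leqnn m) => [|N IH] m le_mN m_gt0; first by lia.
have [p_dvd_m|p_ndvd_m] := boolP (p %| m); last first.
  have cop : coprime p m by rewrite prime_coprime.
  by rewrite lifting_exponent_coprime // (logn_coprime cop) addn0.
have [m' def_m] := dvdnP p_dvd_m; have p_gt1 := prime_gt1 p_pr.
have m'_gt0 : 0 < m' by move: m_gt0; rewrite def_m muln_gt0 => /andP[].
have IHm' : logn p ((1 + w) ^ m' - 1) = logn p w + logn p m'.
  by apply: IH m'_gt0; move: le_mN; rewrite def_m; nia.
have gt1 : 1 < (1 + w) ^ m' by rewrite -(exp1n m') ltn_exp2r //; lia.
set w' := (1 + w) ^ m' - 1.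
have def_w' : (1 + w) ^ m' = 1 + w' by rewrite /w'; lia.
have w'_gt0 : 0 < w' by lia.
have p_dvd_w' : p %| w'.
  rewrite -{1}(expn1 p) (pfactor_dvdn _ p_pr w'_gt0) /w' IHm'.
  move: p_dvd_w; rewrite -{1}(expn1 p) (pfactor_dvdn _ p_pr w_gt0); lia.
rewrite def_m expnM def_w' (lifting_exponent_prime p_dvd_w' w'_gt0).
by rewrite /w' IHm' lognM ?(logn_prime _ p_pr) ?eqxx; lia.
Qed.

End LiftingTheExponent.

Lemma dvdn_addn1_oddexp (x k : nat) : x + 1 %| x ^ (2 * k + 1) + 1.
Proof.
elim: k => [|k IH]; first by rewrite muln0 add0n expn1.
have E : x ^ (2 * k.+1 + 1) + 1 + x * (x + 1) = x ^ 2 * (x ^ (2 * k + 1) + 1) + (x + 1).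
  by rewrite (_ : 2 * k.+1 + 1 = (2 * k + 1) + 2) ?expnD; [ring | lia].
have H : x + 1 %| x ^ (2 * k.+1 + 1) + 1 + x * (x + 1).
  by rewrite E dvdn_add // dvdn_mull.
by rewrite (dvdn_add_eq H) dvdn_mull.
Qed.

Lemma pm1_mod_oddexp (M A e m : nat) : 2 < M -> odd m -> pm1_mod M A e ->
  M %| (A ^ e) ^ m - 1 -> M %| A ^ e - 1.
Proof.
move=> M_gt2 m_odd pm1 M_dvd.
have Ae_gt0 : 0 < A ^ e.
  rewrite lt0n; apply/negP => /eqP Ae0; move: pm1; rewrite /pm1_mod Ae0 add0n.
  by rewrite mod0n modn_small ?dvdn1; lia.
case/orP: pm1 => [|M_dvd_Ae1]; first by rewrite -eqn_mod_dvd.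
have M_dvd_Aem1 : M %| (A ^ e) ^ m + 1.
  have -> : m = 2 * m./2 + 1 by rewrite -{1}(odd_double_half m) m_odd addnC -mul2n.
  exact: dvdn_trans M_dvd_Ae1 (dvdn_addn1_oddexp _ _).
have : M %| ((A ^ e) ^ m - 1) + 2.
  have -> // : (A ^ e) ^ m - 1 + 2 = (A ^ e) ^ m + 1.
  by have := expn_gt0 (A ^ e) m; rewrite Ae_gt0; lia.
by rewrite dvdn_addr // => /(dvdn_leq (isT : 0 < 2)); lia.
Qed.

Lemma eq4_mod6 (Y : nat) : Y = 4 %[mod 6] -> exists2 m, odd m & Y = 3 * m + 1.
Proof.
move=> Y4; exists ((Y %/ 6).*2 + 1); first by rewrite addn1 /= odd_double.
by rewrite {1}(divn_eq Y 6) Y4; lia.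
Qed.

Lemma subn1_cube (b : nat) : b ^ 3 - 1 = (b - 1) * (b ^ 2 + b + 1).
Proof.
case: b => // b; rewrite -addn1.
by rewrite (_ : (b + 1) ^ 3 = b * ((b + 1) ^ 2 + (b + 1) + 1) + 1) ?addnK //; ring.
Qed.

Lemma coprime_double_addn1 (p b : nat) : prime p -> 3 < p -> p %| b ^ 2 + b + 1 ->
  coprime p (2 * b + 1).
Proof.
move=> p_pr p_gt3 p_dvd_u; rewrite prime_coprime //; apply/negP => p_dvd.
have : p %| (2 * b + 1) * (2 * b + 1) + 3.
  by rewrite (_ : _ + 3 = 4 * (b ^ 2 + b + 1)) ?dvdn_mull //; ring.
by rewrite dvdn_addr ?dvdn_mull // => /(dvdn_leq (isT : 0 < 3)); lia.
Qed.

(* The case Y = 4, where the size bound c^(2t) <= u^2 < b^Y is too weak. *)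
Lemma double_le_of_expn_eq (c b z Z : nat) : 2 < c -> 1 < b ->
  c ^ z %| b ^ 2 + b + 1 -> c ^ Z = c ^ z + b * (b - 1) * (b ^ 2 + b + 1) ->
  2 * z <= Z.
Proof.
move=> c_gt2 b_gt1 /dvdnP[v def_u] EZ; rewrite leqNgt; apply/negP => lt_Z.
have v_gt0 : 0 < v by case: v def_u => //; lia.
have cz_gt0 : 0 < c ^ z by rewrite expn_gt0; lia.
have zZ : z <= Z by rewrite -(@leq_exp2l c) ?EZ ?leq_addr //; lia.
have E : c ^ (Z - z) = 1 + b * (b - 1) * v.
  apply/eqP; rewrite -(eqn_pmul2l cz_gt0) -expnD subnKC // EZ def_u; apply/eqP; ring.
have : c ^ (Z - z) * c <= c ^ z by rewrite -expnSr leq_pexp2l //; lia.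
have : c ^ z <= b ^ 2 + b + 1 by rewrite def_u leq_pmull.
rewrite E; have : b * (b - 1) <= b * (b - 1) * v by rewrite leq_pmulr.
by nia.
Qed.

Section MainArgument.

Variables (c a b m z Z : nat).
Hypotheses (c_pr : prime c) (c_gt3 : 3 < c) (b_gt1 : 1 < b) (cop_bc : coprime b c).
Hypotheses (ord_b : e_ord_is c b 3) (m_odd : odd m) (le_zZ : z <= Z).
Hypotheses (Ez : a + b = c ^ z) (EZ : a + b ^ (3 * m + 1) = c ^ Z).

Local Notation u := (b ^ 2 + b + 1).
Local Notation w := (b ^ 3 - 1).
Local Notation D := ((b ^ 3) ^ m - 1).

Lemma cube_eq_addn1 : b ^ 3 = 1 + w.
Proof. have : 0 < b ^ 3 by rewrite expn_gt0 ltnW. by lia. Qed.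

Lemma w_eq : w = (b - 1) * u.
Proof. exact: subn1_cube. Qed.

Lemma w_gt0 : 0 < w.
Proof. by rewrite w_eq muln_gt0; apply/andP; split; lia. Qed.

Lemma cZ_eq : c ^ Z = c ^ z + b * D.
Proof.
have : b <= b ^ (3 * m + 1) by rewrite -{1}(expn1 b) leq_pexp2l //; lia.
by rewrite mulnBr muln1 -expnM -expnS -(addn1 (3 * m)); lia.
Qed.

Lemma dvdn_cz_D : c ^ z %| D.
Proof.
have : c ^ z %| c ^ z + b * D by rewrite -cZ_eq dvdn_exp2l.
by rewrite dvdn_addr // Gauss_dvdr // coprimeXl // coprime_sym.
Qed.

Lemma c_ndvd_b1 : ~~ (c %| b - 1).
Proof.
have [_ [_ not_pm1]] := ord_b.
move: (not_pm1 1 isT); rewrite /pm1_mod expn1 negb_or => /andP[+ _].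
by rewrite eqn_mod_dvd //; lia.
Qed.

Lemma dvdn_c_u : c %| u.
Proof.
have [_ [pm1_b3 _]] := ord_b.
have c_dvd_w : c %| w.
  apply: pm1_mod_oddexp m_odd pm1_b3 _; first by lia.
  apply: dvdn_trans dvdn_cz_D; rewrite -{1}(expn1 c) dvdn_exp2l //.
  by rewrite lt0n; apply/negP => /eqP z0; move: Ez; rewrite z0 expn0; lia.
by move: c_dvd_w; rewrite w_eq Euclid_dvdM // (negbTE c_ndvd_b1).
Qed.

Lemma D_gt0 : 0 < D.
Proof.
have m_gt0 : 0 < m by case: m m_odd.
rewrite subn_gt0 -[X in X < _](exp1n m) ltn_exp2r //.
by rewrite -[X in X < _](exp1n 3) ltn_exp2r.
Qed.

Lemma logn_D : logn c D = logn c u + logn c m.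
Proof.
have m_gt0 : 0 < m by case: m m_odd.
have c_odd : odd c by case: (even_prime c_pr) => [c2|//]; move: c_gt3; rewrite c2.
have c_dvd_w : c %| w by rewrite w_eq dvdn_mull // dvdn_c_u.
have cop : coprime c (b - 1) by rewrite prime_coprime // c_ndvd_b1.
rewrite cube_eq_addn1 lifting_exponent // ?w_gt0 // w_eq.
by rewrite lognM ?(logn_coprime cop) //; lia.
Qed.

Lemma dvdn_exp_sub_logn_u : c ^ (z - logn c m) %| u.
Proof.
have u_gt0 : 0 < u by rewrite addn1.
have := dvdn_cz_D; rewrite (pfactor_dvdn _ c_pr D_gt0) (pfactor_dvdn _ c_pr u_gt0).
by rewrite logn_D; lia.
Qed.

Lemma double_sub_logn_le : 2 * (z - logn c m) <= Z.
Proof.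
have [m1|m_ne1] := eqVneq m 1.
  have c_gt2 : 2 < c by lia.
  rewrite m1 logn1 subn0; apply: (double_le_of_expn_eq c_gt2 b_gt1).
    by move: dvdn_exp_sub_logn_u; rewrite m1 logn1 subn0.
  by rewrite cZ_eq m1 expn1 w_eq mulnA.
have m_ge3 : 3 <= m by case: m m_odd m_ne1 => [|[|[|]]].
have c_gt1 : 1 < c by lia.
apply: ltnW; rewrite -(ltn_exp2l _ _ c_gt1).
have ct_le_u : c ^ (z - logn c m) <= u.
  by apply: dvdn_leq; [rewrite addn1 | exact: dvdn_exp_sub_logn_u].
have le_u2 : c ^ (2 * (z - logn c m)) <= u * u.
  by rewrite mulnC expnM expnS expn1 leq_mul.
have lt_u_b3 : u < b ^ 3 by nia.
have : b ^ 3 * b ^ 3 <= b ^ (3 * m + 1) by rewrite -expnD leq_pexp2l //; lia.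
have := ltn_mul lt_u_b3 lt_u_b3.
rewrite -EZ; lia.
Qed.

Lemma dvdn_combination : c ^ (2 * (z - logn c m)) %| c ^ z * (2 * b + 1) + 3 * m * u.
Proof.
set t := z - logn c m.
have [K HK] := exp1Dn_sq_rem w m; rewrite -cube_eq_addn1 in HK.
have def_D : D = m * w + w ^ 2 * K by rewrite HK; lia.
have Id : (2 * b + 1) * (c ^ z * (2 * b + 1) + 3 * m * u) + 3 * c ^ Z
    = 4 * u * c ^ z + 3 * m * (u * u) + 3 * b * (w * w) * K.
  rewrite cZ_eq def_D w_eq.
  have [b' ->] : exists b', b = b' + 1 by exists (b - 1); lia.
  by rewrite addnK; ring.
have ct_u := dvdn_exp_sub_logn_u.
have ct_w : c ^ t %| w by rewrite w_eq dvdn_mull.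
have ct_cz : c ^ t %| c ^ z by rewrite dvdn_exp2l // leq_subr.
have c2t : c ^ (2 * t) = c ^ t * c ^ t by rewrite mul2n -addnn expnD.
have : c ^ (2 * t) %| (2 * b + 1) * (c ^ z * (2 * b + 1) + 3 * m * u) + 3 * c ^ Z.
  rewrite Id c2t !dvdn_add //.
  - by rewrite -mulnA dvdn_mull // dvdn_mul.
  - by rewrite dvdn_mull // dvdn_mul.
  - by rewrite dvdn_mulr // dvdn_mull // dvdn_mul.
have c2t_Z : c ^ (2 * t) %| 3 * c ^ Z by rewrite dvdn_mull // dvdn_exp2l // double_sub_logn_le.
have cop : coprime (c ^ (2 * t)) (2 * b + 1).
  by rewrite coprimeXl // coprime_double_addn1 // dvdn_c_u.
by rewrite dvdn_addl // Gauss_dvdr.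
Qed.

End MainArgument.

Theorem mainTheorem11 (r a b c z Y Z : nat) :
  1 <= r -> c = 2 ^ r * 3 + 1 -> prime c ->
  1 < a -> 1 < b ->
  coprime a b -> coprime a c -> coprime b c ->
  e_ord_is c b 3 ->
  0 < z -> 0 < Y -> 0 < Z -> z <= Z -> Y = 4 %[mod 6] ->
  a + b = c ^ z -> a + b ^ Y = c ^ Z ->
  let e := logn c ((Y - 1) %/ 3) in
  c ^ (2 * (z - e)) %| c ^ z * (2 * b + 1) + (Y - 1) * (b ^ 2 + b + 1).
Proof.
move=> r_ge1 def_c c_pr _ b_gt1 _ _ cop_bc ord_b _ _ _ le_zZ /eq4_mod6[m m_odd ->] Ez EZ.
have c_gt3 : 3 < c by rewrite def_c; have := leq_pexp2l (isT : 0 < 2) r_ge1; lia.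
rewrite /= addnK mulKn //.
exact: (dvdn_combination c_pr c_gt3 b_gt1 cop_bc ord_b m_odd le_zZ Ez EZ).
Qed.
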